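(* Let $X\in\mathbb{R}^{m\times n}_+$, $W\in\mathbb{R}^{m\times r}$, $H\in\mathbb{R}^{r\times n}_+$ with $X=WH$ satisfying the facet-based conditions (FBC) for some parameter $s$, where $d=\operatorname{rank}(X)$, and assume $X$ has no duplicated columns. Let $\bar x=\frac1n\sum_{j=1}^n X(:,j)$, $e$ the all-ones vector, and assume $X-\bar x e^\top$ has rank $d-1$ with compact SVD $X-\bar xe^\top=U\Sigma V^\top$, $U\in\mathbb{R}^{m\times(d-1)}$. Let $\tilde X=U^\top(X-\bar xe^\top)\in\mathbb{R}^{(d-1)\times n}$ and $\tilde W=U^\top(W-\bar xe^\top)$. Then, for $\theta\in\mathbb{R}^{d-1}$, the set $\{x\in\operatorname{conv}(\tilde W): \theta^\top x=1\}$ is a facet of $\operatorname{conv}(\tilde W)$ if and only if $\theta$ is a vertex of $\operatorname{conv}(\tilde X)^*=\{\theta:\tilde X^\top\theta\le e\}$ and $\big|\{j: \tilde X(:,j)^\top\theta=1\}\big|\ge s$.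
   Context: For a matrix $M$, $\operatorname{conv}(M)$ denotes the convex hull of its columns. For a set $\mathcal A$ containing the origin in its interior, its dual is $\mathcal A^*=\{y: x^\top y\le 1 \text{ for all } x\in\mathcal A\}$. $|\mathcal A|$ denotes cardinality. A facet of a polytope is a face of dimension one less than the dimension of the polytope. The unit simplex is $\Delta^r=\{x\in\mathbb{R}^r: x\ge 0,\ \sum_i x_i=1\}$. Facet-based conditions (FBC) with parameter $s$ for $X=WH$, where $d=\operatorname{rank}(X)$: (a) no column of $W$ lies in the convex hull of the other columns of $W$; (b) $H(:,j)\in\Delta^r$ for all $j$; (c) each facet of $\operatorname{conv}(W)$ contains at least $s\ge d$ distinct columns of $X$, and among them at least $d-1$ generate that facet (the convex hull of these $s$ columns has dimension $d-2$); (d) every facet of $\operatorname{conv}(X)$ which is not a facet of $\operatorname{conv}(W)$ contains strictly fewer than $s$ distinct columns of $X$. *)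

From HB Require Import structures.
From mathcomp Require Import all_boot all_order all_algebra.
From mathcomp Require Import reals.
Set Implicit Arguments. Unset Strict Implicit. Unset Printing Implicit Defensive.
Import Order.TTheory GRing.Theory Num.Theory.
Local Open Scope ring_scope.

Section Defs.
Variable R : realType.

Definition dotp p (u v : 'cV[R]_p) : R := (u^T *m v) ord0 ord0.

Definition conv_sub p q (M : 'M[R]_(p, q)) (J : {set 'I_q}) (x : 'cV[R]_p) : Prop :=
  exists l : 'cV[R]_q,
    (forall j, 0 <= l j ord0) /\ (forall j, j \notin J -> l j ord0 = 0) /\
    \sum_j l j ord0 = 1 /\ x = M *m l.

Definition conv p q (M : 'M[R]_(p, q)) : 'cV[R]_p -> Prop := conv_sub M setT.

Definition dual p (A : 'cV[R]_p -> Prop) (y : 'cV[R]_p) : Prop :=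
  forall x, A x -> dotp x y <= 1.

(* S contains j+1 affinely independent points. *)
Definition dim_ge p (S : 'cV[R]_p -> Prop) (j : nat) : Prop :=
  exists M : 'M[R]_(p, j.+1),
    (forall i, S (col i M)) /\ \rank (col_mx M (const_mx 1 : 'M[R]_(1, j.+1))) = j.+1.

(* S has affine dimension k (k = -1 iff S is empty). *)
Definition affdim_is p (S : 'cV[R]_p -> Prop) (k : int) : Prop :=
  (-1 <= k) /\ forall j : nat, dim_ge S j <-> (j%:Z <= k).

(* F is a face of the convex set P: intersection of P with a supporting
   hyperplane (includes the empty face and P itself). *)
Definition is_face p (P F : 'cV[R]_p -> Prop) : Prop :=
  exists (a : 'cV[R]_p) (b : R),
    (forall x, P x -> dotp a x <= b) /\ (forall x, F x <-> (P x /\ dotp a x = b)).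

Definition is_facet p (P F : 'cV[R]_p -> Prop) : Prop :=
  is_face P F /\ exists k : int, affdim_is P k /\ affdim_is F (k - 1).

Definition is_vertex p (Q : 'cV[R]_p -> Prop) (t : 'cV[R]_p) : Prop :=
  Q t /\ forall y z (c : R), Q y -> Q z -> 0 < c < 1 ->
    t = c *: y + (1 - c) *: z -> y = z.

Definition FBC m n r (X : 'M[R]_(m, n)) (W : 'M[R]_(m, r)) (H : 'M[R]_(r, n))
    (s : nat) : Prop :=
  let d := \rank X in
  X = W *m H /\
  (forall k : 'I_r, ~ conv (col' k W) (col k W)) /\
  (forall j : 'I_n, (forall i, 0 <= H i j) /\ \sum_i H i j = 1) /\
  (d <= s)%N /\
  (forall F, is_facet (conv W) F ->
     (exists S : {set 'I_n},
        (s <= #|S|)%N /\ (forall j, j \in S -> F (col j X)) /\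
        {in S &, injective (fun j => col j X)} /\
        affdim_is (conv_sub X S) (d%:Z - 2))) /\
  (* (d) *)
  (forall G, is_facet (conv X) G -> ~ is_facet (conv W) G ->
     forall S : {set 'I_n}, (forall j, j \in S -> G (col j X)) ->
       {in S &, injective (fun j => col j X)} -> (#|S| < s)%N).

End Defs.

From mathcomp Require Import all_boot all_order all_algebra.
From mathcomp Require Import reals.
From mathcomp Require Import ring lra zify.
From Stdlib Require Import Classical.
Set Implicit Arguments. Unset Strict Implicit. Unset Printing Implicit Defensive.
Import Order.TTheory GRing.Theory Num.Theory.
Local Open Scope ring_scope.

(* Centering at xbar and projecting by U^T is an affine bijection between the affine
   hull of conv X and R^k; a dimension count based on the facet conditions shows that
   this hull also contains W, so facets of conv Wt and of conv W correspond.  A facet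
   of conv W contains at least s columns of X spanning a (k-1)-dimensional face;
   these pin down its normal, which is thus a vertex of the polar of conv Xt with at
   least s active columns.  Conversely, the active columns of such a vertex span a
   facet of conv X carrying at least s columns of X, which by condition (d) is a
   facet of conv W.  Facets of a polytope are produced by a greedy ascent in the
   polar that makes rank-many columns active. *)

Section InnerProduct.
Variable R : realType.
Implicit Types p q : nat.

Lemma dotpE p (u v : 'cV[R]_p) : dotp u v = \sum_i u i ord0 * v i ord0.
Proof. by rewrite /dotp mxE; apply: eq_bigr => i _; rewrite mxE. Qed.

Lemma dotpC p (u v : 'cV[R]_p) : dotp u v = dotp v u.
Proof. by rewrite !dotpE; apply: eq_bigr => i _; rewrite mulrC. Qed.

Lemma dotpDr p (u v w : 'cV[R]_p) : dotp u (v + w) = dotp u v + dotp u w.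
Proof. by rewrite /dotp mulmxDr mxE. Qed.

Lemma dotpDl p (u v w : 'cV[R]_p) : dotp (v + w) u = dotp v u + dotp w u.
Proof. by rewrite dotpC dotpDr !(dotpC u). Qed.

Lemma dotpZr p (u v : 'cV[R]_p) c : dotp u (c *: v) = c * dotp u v.
Proof. by rewrite /dotp -scalemxAr mxE. Qed.

Lemma dotpZl p (u v : 'cV[R]_p) c : dotp (c *: v) u = c * dotp v u.
Proof. by rewrite dotpC dotpZr dotpC. Qed.

Lemma dotpNr p (u v : 'cV[R]_p) : dotp u (- v) = - dotp u v.
Proof. by rewrite -scaleN1r dotpZr mulN1r. Qed.

Lemma dotpNl p (u v : 'cV[R]_p) : dotp (- v) u = - dotp v u.
Proof. by rewrite dotpC dotpNr dotpC. Qed.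

Lemma dotpBr p (u v w : 'cV[R]_p) : dotp u (v - w) = dotp u v - dotp u w.
Proof. by rewrite dotpDr dotpNr. Qed.

Lemma dotpBl p (u v w : 'cV[R]_p) : dotp (v - w) u = dotp v u - dotp w u.
Proof. by rewrite dotpC dotpBr !(dotpC u). Qed.

Lemma dotp0r p (u : 'cV[R]_p) : dotp u 0 = 0.
Proof. by rewrite /dotp mulmx0 mxE. Qed.

Lemma dotp0l p (u : 'cV[R]_p) : dotp 0 u = 0.
Proof. by rewrite dotpC dotp0r. Qed.

Lemma dotp_mulmxl p q (A : 'M[R]_(q, p)) (u : 'cV[R]_p) (v : 'cV[R]_q) :
  dotp (A *m u) v = dotp u (A^T *m v).
Proof. by rewrite /dotp trmx_mul mulmxA. Qed.

Lemma dotp_mulmxr p q (A : 'M[R]_(p, q)) (u : 'cV[R]_p) (v : 'cV[R]_q) :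
  dotp u (A *m v) = dotp (A^T *m u) v.
Proof. by rewrite dotp_mulmxl trmxK. Qed.

Lemma dotp_mulmx_cols p q (M : 'M[R]_(p, q)) (u : 'cV[R]_p) (l : 'cV[R]_q) :
  dotp u (M *m l) = \sum_j l j ord0 * dotp u (col j M).
Proof.
rewrite dotpE (eq_bigr (fun i => \sum_j u i ord0 * (M i j * l j ord0))); last first.
  by move=> i _; rewrite mxE big_distrr.
rewrite exchange_big /=; apply: eq_bigr => j _; rewrite dotpE big_distrr /=.
by apply: eq_bigr => i _; rewrite mxE; ring.
Qed.

Lemma dotp_self_eq0 p (u : 'cV[R]_p) : (dotp u u == 0) = (u == 0).
Proof.
apply/idP/eqP => [|->]; last by rewrite dotp0r.
rewrite dotpE psumr_eq0 => [/allP u0|i _]; last by rewrite -expr2 sqr_ge0.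
apply/matrixP => i j; rewrite (ord1 j) mxE.
by have /implyP/(_ isT) := u0 i (mem_index_enum i); rewrite -expr2 sqrf_eq0 => /eqP.
Qed.

Lemma trmx_mul_eq0P p q (v : 'cV[R]_p) (M : 'M[R]_(p, q)) :
  v^T *m M = 0 <-> forall l, dotp v (col l M) = 0.
Proof.
have vME l : (v^T *m M) ord0 l = dotp v (col l M).
  by rewrite /dotp !mxE; apply: eq_bigr => i _; rewrite !mxE.
split=> [vM0 l|vM0]; first by rewrite -vME vM0 mxE.
by apply/matrixP => i l; rewrite (ord1 i) vME vM0 mxE.
Qed.

End InnerProduct.

Section AffineIndependence.
Variable R : realType.
Implicit Types p q N : nat.

Definition affine_indep p N (M : 'M[R]_(p, N)) : Prop :=
  forall mu : 'cV_N, M *m mu = 0 -> \sum_i mu i ord0 = 0 -> mu = 0.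

Lemma scalar_mx0 q : (0 : R)%:M = 0 :> 'M[R]_q.
Proof. exact: raddf0. Qed.

Lemma const1_mulmx N (mu : 'cV[R]_N) :
  (const_mx 1 : 'M[R]_(1, N)) *m mu = (\sum_i mu i ord0)%:M.
Proof.
apply/matrixP => i j; rewrite (ord1 i) (ord1 j) !mxE /=.
by apply: eq_bigr => l _; rewrite mxE mul1r.
Qed.

Lemma affine_indepP p N (M : 'M[R]_(p, N)) :
  \rank (col_mx M (const_mx 1 : 'M[R]_(1, N))) = N <-> affine_indep M.
Proof.
set C := col_mx _ _; split.
- move=> rkC mu Mmu smu.
  have frC : row_free C^T by rewrite /row_free mxrank_tr rkC.
  have : mu^T *m C^T = 0 *m C^T.
    by rewrite mul0mx -trmx_mul mul_col_mx Mmu const1_mulmx smu scalar_mx0 col_mx0 trmx0.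
  by move/(row_free_inj frC)/(congr1 trmx); rewrite trmxK trmx0.
- move=> indM; apply/eqP; rewrite -mxrank_tr; apply: inj_row_free => v.
  move/(congr1 trmx); rewrite trmx_mul trmxK trmx0 mul_col_mx => /eqP.
  rewrite -col_mx0 => /eqP /eq_col_mx [Mv sv].
  have /(congr1 (fun A : 'M[R]_1 => A ord0 ord0)) := sv.
  rewrite const1_mulmx !mxE /= mulr1n => /(indM _ Mv)/(congr1 trmx).
  by rewrite trmxK trmx0.
Qed.

Lemma dim_geP p (S : 'cV[R]_p -> Prop) j :
  dim_ge S j <-> exists M : 'M[R]_(p, j.+1), (forall i, S (col i M)) /\ affine_indep M.
Proof. by split=> -[M [SM /affine_indepP indM]]; exists M. Qed.

Lemma affine_indep_colsub p N a (w : 'I_a -> 'I_N) (M : 'M[R]_(p, N)) :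
  injective w -> affine_indep M -> affine_indep (colsub w M).
Proof.
move=> w_inj indM mu Mmu smu; set E : 'M[R]_(N, a) := colsub w 1%:M.
have ME : colsub w M = M *m E by rewrite mulmx_colsub mulmx1.
have Emu b : (E *m mu) (w b) ord0 = mu b ord0.
  rewrite mxE (bigD1 b) //= !mxE eqxx mul1r big1 ?addr0 // => c cb.
  by rewrite !mxE (inj_eq w_inj) eq_sym (negbTE cb) mul0r.
have sEmu : \sum_i (E *m mu) i ord0 = \sum_i mu i ord0.
  under eq_bigr => i _ do rewrite mxE.
  rewrite exchange_big /=; apply: eq_bigr => b _.
  rewrite (bigD1 (w b)) //= !mxE eqxx mul1r big1 ?addr0 // => i /negbTE iw.
  by rewrite !mxE iw mul0r.
have Emu0 : E *m mu = 0 by apply: indM; rewrite ?mulmxA -?ME ?sEmu.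
by apply/matrixP => b c; rewrite (ord1 c) -Emu Emu0 !mxE.
Qed.

Lemma dim_ge_colsub p (S : 'cV[R]_p -> Prop) N (M : 'M[R]_(p, N)) j :
  (forall i, S (col i M)) -> affine_indep M -> (j < N)%N -> dim_ge S j.
Proof.
move=> SM indM jN; apply/dim_geP; exists (colsub (widen_ord jN) M); split.
  by move=> i; rewrite col_colsub.
by apply: affine_indep_colsub => // x y /(congr1 val) /= /val_inj.
Qed.

Lemma sub_dim_ge p (S T : 'cV[R]_p -> Prop) j :
  (forall x, S x -> T x) -> dim_ge S j -> dim_ge T j.
Proof. by move=> ST [M [SM rkM]]; exists M; split => // i; apply: ST. Qed.

Lemma dim_ge0 p (S : 'cV[R]_p -> Prop) x : S x -> dim_ge S 0.
Proof.
move=> Sx; apply/dim_geP; exists x; split.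
  by move=> i; suff -> : col i x = x by []; apply/colP => a; rewrite mxE (ord1 i).
by move=> mu _; rewrite big_ord1 => mu0; apply/colP => i; rewrite (ord1 i) mu0 mxE.
Qed.

Lemma col_affine_map p p' q (A : 'M[R]_(p', p)) (c : 'cV[R]_p') (M : 'M[R]_(p, q)) i :
  col i (A *m M + c *m const_mx 1) = A *m col i M + c.
Proof.
apply/colP => a; rewrite !mxE big_ord1 !mxE mulr1; congr (_ + _).
by apply: eq_bigr => l _; rewrite !mxE.
Qed.

Lemma dim_ge_affine_map p p' (S : 'cV[R]_p -> Prop) (T : 'cV[R]_p' -> Prop)
    (A : 'M[R]_(p', p)) (c : 'cV[R]_p') (B : 'M[R]_(p, p')) (e : 'cV[R]_p) j :
  (forall x, S x -> T (A *m x + c) /\ B *m (A *m x + c) + e = x) ->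
  dim_ge S j -> dim_ge T j.
Proof.
move=> ST /dim_geP [M [SM indM]]; apply/dim_geP.
exists (A *m M + c *m const_mx 1); split.
  by move=> i; rewrite col_affine_map; apply: (ST _ (SM i)).1.
move=> mu AMmu smu; apply: indM => //.
have -> : M = B *m (A *m M + c *m const_mx 1) + e *m const_mx 1.
  apply/trmx_inj/row_matrixP => i.
  by rewrite -!tr_col col_affine_map col_affine_map (ST _ (SM i)).2.
by rewrite mulmxDl -!mulmxA AMmu const1_mulmx smu scalar_mx0 !mulmx0 addr0.
Qed.

Lemma affdim_uniq p (S : 'cV[R]_p -> Prop) a b :
  affdim_is S a -> affdim_is S b -> a = b.
Proof.
have le_dim (x y : int) : -1 <= x -> -1 <= y ->
    (forall j : nat, j%:Z <= x -> j%:Z <= y) -> x <= y.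
  move=> x1 y1 xy; have [x0|] := leP 0 x; last by lia.
  by have := xy `|x|%N; rewrite gez0_abs //; apply.
move=> [a1 Sa] [b1 Sb]; apply/eqP; rewrite eq_le; apply/andP; split.
  by apply: le_dim => // j /Sa /Sb.
by apply: le_dim => // j /Sb /Sa.
Qed.

Lemma affdim_isP p (S : 'cV[R]_p -> Prop) K :
  (forall j, dim_ge S j <-> (j < K)%N) -> affdim_is S (K%:Z - 1).
Proof.
move=> SK; split=> [|j]; first lia.
by rewrite SK; split; lia.
Qed.

Lemma eq_affdim p p' (S : 'cV[R]_p -> Prop) (T : 'cV[R]_p' -> Prop) k :
  (forall j, dim_ge S j <-> dim_ge T j) -> affdim_is S k -> affdim_is T k.
Proof. by move=> ST [k1 Sk]; split => // j; rewrite -ST Sk. Qed.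

Lemma all_col_row_mx p N (M : 'M[R]_(p, N)) (x : 'cV[R]_p) (S : 'cV[R]_p -> Prop) :
  (forall i, S (col i M)) -> S x -> forall i, S (col i (row_mx M x)).
Proof.
move=> SM Sx i; rewrite -(splitK i); case: (split i) => l /=.
  suff -> : col (lshift 1 l) (row_mx M x) = col l M by [].
  by apply/colP => a; rewrite [LHS]mxE row_mxEl [RHS]mxE.
suff -> : col (rshift N l) (row_mx M x) = x by [].
by apply/colP => a; rewrite [LHS]mxE row_mxEr (ord1 l).
Qed.

Lemma affine_indep_row_mx p N (M : 'M[R]_(p, N)) (x a : 'cV[R]_p) (b : R) :
  affine_indep M -> (forall i, dotp a (col i M) = b) -> dotp a x != b ->
  affine_indep (row_mx M x).
Proof.
move=> indM aM ax mu; rewrite -(vsubmxK mu) mul_row_col.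
set u := usubmx mu; set d := dsubmx mu.
rewrite big_split_ord /= big_ord1 col_mxEd.
under eq_bigr => i _ do rewrite col_mxEu.
have -> : x *m d = d ord0 ord0 *: x by rewrite {1}(mx11_scalar d) mul_mx_scalar.
move=> Mux sud.
have su : \sum_i u i ord0 = - d ord0 ord0 by apply/eqP; rewrite -addr_eq0 sud.
have /(congr1 (dotp a)) := Mux.
rewrite dotp0r dotpDr dotp_mulmx_cols dotpZr.
under eq_bigr => i _ do rewrite aM.
rewrite -big_distrl /= su mulNr addrC -mulrBr => /eqP.
rewrite mulf_eq0 subr_eq0 (negbTE ax) orbF => /eqP d0.
have d00 : d = 0 by apply/matrixP => i j; rewrite (ord1 i) (ord1 j) d0 mxE.
have u0 : u = 0 by apply: indM; move: Mux sud; rewrite d0 scale0r !addr0.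
by rewrite u0 d00 col_mx0.
Qed.

Lemma affine_indep_free p N (M : 'M[R]_(p, N)) (th : 'cV[R]_p) :
  affine_indep M -> (forall i, dotp th (col i M) = 1) ->
  forall mu : 'cV[R]_N, M *m mu = 0 -> mu = 0.
Proof.
move=> indM thM mu Mmu; apply: indM => //.
have := congr1 (dotp th) Mmu; rewrite dotp0r dotp_mulmx_cols.
by under eq_bigr => i _ do rewrite thM mulr1.
Qed.

Lemma dim_ge_extend p (P Q : 'cV[R]_p -> Prop) (a x : 'cV[R]_p) b j :
  (forall y, P y -> Q y /\ dotp a y = b) -> Q x -> dotp a x != b ->
  dim_ge P j -> dim_ge Q j.+1.
Proof.
move=> PQ Qx ax /dim_geP [M [PM indM]].
have indMx := affine_indep_row_mx indM (fun i => (PQ _ (PM i)).2) ax.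
have QMx := all_col_row_mx (fun i => (PQ _ (PM i)).1) Qx.
by apply: (dim_ge_colsub QMx indMx); rewrite addn1.
Qed.

End AffineIndependence.

Section Facets.
Variable R : realType.
Implicit Types p : nat.

Definition slice p (P : 'cV[R]_p -> Prop) (a : 'cV[R]_p) (b : R) : 'cV[R]_p -> Prop :=
  fun x => P x /\ dotp a x = b.

Lemma hyperplane_facet p (P : 'cV[R]_p -> Prop) (a : 'cV[R]_p) (b : R) (K : nat) :
  (forall x, P x -> dotp a x <= b) -> affdim_is P K%:Z ->
  (exists x, P x /\ dotp a x != b) ->
  (forall j, (j < K)%N -> dim_ge (slice P a b) j) ->
  is_facet P (slice P a b) /\ affdim_is (slice P a b) (K%:Z - 1).
Proof.
move=> Pab PK [x [Px ax]] dimF.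
have affF : affdim_is (slice P a b) (K%:Z - 1).
  apply: affdim_isP => j; split; last exact: dimF.
  by move/(dim_ge_extend (fun y => id) Px ax)/(PK.2 j.+1); lia.
by split=> //; split; [exists a, b | exists K%:Z].
Qed.

Lemma facet_affdim p (P F : 'cV[R]_p -> Prop) (k : int) :
  is_facet P F -> affdim_is P k -> affdim_is F (k - 1).
Proof. by move=> [_ [k' [Pk' Fk']]] Pk; rewrite (affdim_uniq Pk Pk'). Qed.

End Facets.

Section ConvexHull.
Variable R : realType.
Implicit Types p q r : nat.

Lemma convP p q (M : 'M[R]_(p, q)) x :
  conv M x <-> exists l : 'cV[R]_q,
    (forall j, 0 <= l j ord0) /\ \sum_j l j ord0 = 1 /\ x = M *m l.
Proof.
split=> [[l [l0 [_ [l1 ->]]]]|[l [l0 [l1 ->]]]]; exists l => //.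
by split=> //; split=> // j; rewrite in_setT.
Qed.

Lemma conv_col p q (M : 'M[R]_(p, q)) j : conv M (col j M).
Proof.
apply/convP; exists (delta_mx j ord0); split.
  by move=> i; rewrite mxE; case: (_ && _).
split; last by rewrite colE.
rewrite (bigD1 j) //= mxE !eqxx /= big1 ?addr0 // => i /negbTE ij.
by rewrite mxE ij.
Qed.

Lemma conv_centroid p q (M : 'M[R]_(p, q)) : (0 < q)%N ->
  conv M (q%:R^-1 *: (M *m const_mx 1)).
Proof.
move=> q0; apply/convP; exists (q%:R^-1 *: const_mx 1); split.
  by move=> j; rewrite !mxE mulr1 invr_ge0 ler0n.
split; last by rewrite scalemxAr.
under eq_bigr => j _ do rewrite !mxE mulr1.
by rewrite sumr_const card_ord -[LHS]mulr_natr mulVf // pnatr_eq0 -lt0n.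
Qed.

Lemma conv_dotp_le p q (M : 'M[R]_(p, q)) (a : 'cV[R]_p) b x :
  (forall j, dotp a (col j M) <= b) -> conv M x -> dotp a x <= b.
Proof.
move=> aM /convP [l [l0 [l1 ->]]]; rewrite dotp_mulmx_cols.
rewrite -[b]mul1r -l1 big_distrl /=.
by apply: ler_sum => j _; apply: ler_wpM2l.
Qed.

Lemma conv_sub_dotp_eq p q (M : 'M[R]_(p, q)) (S : {set 'I_q}) (a : 'cV[R]_p) b x :
  (forall j, j \in S -> dotp a (col j M) = b) -> conv_sub M S x -> dotp a x = b.
Proof.
move=> aM [l [l0 [lS [l1 ->]]]]; rewrite dotp_mulmx_cols.
rewrite -[b]mul1r -l1 big_distrl /=; apply: eq_bigr => j _.
by case: (boolP (j \in S)) => jS; [rewrite aM | rewrite lS // !mul0r].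
Qed.

Lemma conv_subW p q (M : 'M[R]_(p, q)) (S : {set 'I_q}) x : conv_sub M S x -> conv M x.
Proof. by move=> [l [l0 [_ [l1 ->]]]]; apply/convP; exists l. Qed.

Lemma conv_mulmx_stochastic p q r (W : 'M[R]_(p, r)) (H : 'M[R]_(r, q)) x :
  (forall j, (forall i, 0 <= H i j) /\ \sum_i H i j = 1) ->
  conv (W *m H) x -> conv W x.
Proof.
move=> Hst /convP [l [l0 [l1 ->]]]; apply/convP; exists (H *m l); split.
  move=> i; rewrite mxE; apply: sumr_ge0 => j _; apply: mulr_ge0 => //.
  exact: (Hst j).1.
split; last by rewrite mulmxA.
under eq_bigr => i _ do rewrite mxE.
rewrite exchange_big /= -l1; apply: eq_bigr => j _.
by rewrite -big_distrl /= (Hst j).2 mul1r.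
Qed.

Lemma conv_affine_map p p' q (M : 'M[R]_(p, q)) (A : 'M[R]_(p', p)) (c : 'cV[R]_p') x :
  conv M x -> conv (A *m M + c *m const_mx 1) (A *m x + c).
Proof.
move=> /convP [l [l0 [l1 ->]]]; apply/convP; exists l; split => //; split => //.
by rewrite mulmxDl -!mulmxA const1_mulmx l1 mul_mx_scalar scale1r.
Qed.

End ConvexHull.

Section Frames.
Variable R : realType.
Implicit Types p q N : nat.

Lemma free_colsub p q (B : 'M[R]_(p, q)) :
  exists K (f : 'I_K -> 'I_q), K = \rank B /\ injective f /\
    forall mu : 'cV[R]_K, colsub f B *m mu = 0 -> mu = 0.
Proof.
exists (\rank B^T), (maxrankfun B^T); split; first by rewrite mxrank_tr.
split=> [|mu Bmu]; first exact: maxrankfun_inj.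
have := maxrowsub_free B^T; rewrite -[rowsub _ _]trmx_mxsub => frB.
apply/trmx_inj/(row_free_inj frB).
by rewrite trmx0 mul0mx -trmx_mul Bmu trmx0.
Qed.

Lemma rank_lt_left_kernel p q (B : 'M[R]_(p, q)) :
  (\rank B < p)%N -> exists2 d : 'cV[R]_p, d != 0 & d^T *m B = 0.
Proof.
move=> rkB; have kB0 : kermx B != 0 by rewrite -mxrank_eq0 mxrank_ker; lia.
have [i kBi] : exists i, row i (kermx B) != 0.
  apply/existsP; apply: contraR kB0 => /existsPn kB0.
  by apply/eqP/row_matrixP => i; rewrite row0; apply/eqP; rewrite -[_ == _]negbK.
exists (row i (kermx B))^T; first by rewrite -trmx0 (inj_eq trmx_inj).
by rewrite trmxK; apply/sub_kermxP; exact: row_sub.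
Qed.

Lemma free_frame_dotp_inj k N (M : 'M[R]_(k, N)) (u v : 'cV[R]_k) :
  (forall mu : 'cV[R]_N, M *m mu = 0 -> mu = 0) -> (k <= N)%N ->
  (forall l, dotp u (col l M) = dotp v (col l M)) -> u = v.
Proof.
move=> freeM kN uv; have frMt : row_free M^T.
  apply: inj_row_free => w /(congr1 trmx); rewrite trmx_mul trmxK trmx0.
  by move/freeM/(congr1 trmx); rewrite trmxK trmx0.
have frM : row_free M.
  by move: frMt (rank_leq_row M); rewrite /row_free mxrank_tr => /eqP ->; lia.
apply/eqP; rewrite -subr_eq0; apply/eqP/trmx_inj/(row_free_inj frM).
rewrite trmx0 mul0mx; apply/trmx_mul_eq0P => l.
by rewrite dotpBl uv subrr.
Qed.

Lemma frame_normal k N (M : 'M[R]_(k, N)) (th a : 'cV[R]_k) b :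
  (forall mu : 'cV[R]_N, M *m mu = 0 -> mu = 0) -> (k <= N)%N ->
  (forall l, dotp th (col l M) = 1) -> (forall l, dotp a (col l M) = b) ->
  a = b *: th.
Proof.
move=> freeM kN thM aM; apply: (free_frame_dotp_inj freeM kN) => l.
by rewrite dotpZl thM aM mulr1.
Qed.

Definition active p q (Y : 'M[R]_(p, q)) (t : 'cV[R]_p) : {set 'I_q} :=
  [set j | dotp (col j Y) t == 1].

Definition maskmx p q (Y : 'M[R]_(p, q)) (A : {set 'I_q}) : 'M[R]_(p, q) :=
  Y *m diag_mx (\row_i (i \in A)%:R).

Lemma col_maskmx p q (Y : 'M[R]_(p, q)) A i :
  col i (maskmx Y A) = if i \in A then col i Y else 0.
Proof.
apply/colP => a; rewrite !mxE (bigD1 i) //= big1 ?addr0.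
  by rewrite !mxE eqxx mulr1n; case: (i \in A); rewrite ?mulr1 ?mulr0 ?mxE.
by move=> l /negbTE li; rewrite !mxE li mulr0n mulr0.
Qed.

Lemma free_colsub_maskmx p q (Y : 'M[R]_(p, q)) (A : {set 'I_q}) :
  exists K (f : 'I_K -> 'I_q), [/\ K = \rank (maskmx Y A), forall l, f l \in A &
    forall mu : 'cV[R]_K, colsub f Y *m mu = 0 -> mu = 0].
Proof.
have [K [f [eK [_ freeK]]]] := free_colsub (maskmx Y A).
have fA l : f l \in A.
  apply: contraT => flA; have := freeK (delta_mx l ord0).
  rewrite -colE col_colsub col_maskmx (negbTE flA) => /(_ erefl) /matrixP /(_ l ord0).
  by rewrite !mxE !eqxx => /eqP; rewrite oner_eq0.
exists K, f; split=> // mu Ymu; apply: freeK; rewrite -{}Ymu; congr (_ *m _).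
by apply/trmx_inj/row_matrixP => l; rewrite -!tr_col !col_colsub col_maskmx fA.
Qed.

Lemma mxrank_maskmx p q (Y : 'M[R]_(p, q)) A : (\rank (maskmx Y A) <= \rank Y)%N.
Proof. exact: mxrankM_maxl. Qed.

Lemma maskmx_lt_dir p q (Y : 'M[R]_(p, q)) (A : {set 'I_q}) :
  (\rank (maskmx Y A) < \rank Y)%N ->
  exists mu : 'cV[R]_q, Y *m mu != 0 /\ (Y *m mu)^T *m maskmx Y A = 0.
Proof.
move=> rkA; set G := Y^T *m maskmx Y A.
have rkG : (\rank G <= \rank (maskmx Y A))%N by apply: mxrankM_maxr.
have /row_subPn [i kGi] : ~~ (kermx G <= kermx Y^T)%MS.
  apply/negP => /mxrankS; rewrite !mxrank_ker mxrank_tr.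
  by have := rank_leq_col Y; lia.
exists (row i (kermx G))^T; split.
  apply: contra kGi => /eqP Yk0; apply/sub_kermxP.
  by rewrite -[row i _]trmxK -trmx_mul Yk0 trmx0.
by rewrite trmx_mul trmxK -mulmxA; apply/sub_kermxP; exact: row_sub.
Qed.

Lemma mxrank_maskmx_ltS p q (Y : 'M[R]_(p, q)) (A B : {set 'I_q}) (d : 'cV[R]_p) i :
  A \subset B -> i \in B -> d^T *m maskmx Y A = 0 -> dotp d (col i Y) != 0 ->
  (\rank (maskmx Y A) < \rank (maskmx Y B))%N.
Proof.
move=> AB iB dA di.
have AE : maskmx Y A = maskmx (maskmx Y B) A.
  apply/trmx_inj/row_matrixP => j; rewrite -!tr_col !col_maskmx.
  by case: (boolP (j \in A)) => // /(subsetP AB) ->.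
have : ((maskmx Y A)^T < (maskmx Y B)^T)%MS.
  rewrite ltmxE; apply/andP; split; first by rewrite AE /maskmx trmx_mul submxMl.
  apply/negP => /(submx_trans (row_sub i _)) /submxP [w].
  rewrite -tr_col col_maskmx iB => /(congr1 (mulmx^~ d)).
  have -> : w *m (maskmx Y A)^T *m d = 0.
    by rewrite -mulmxA -[d]trmxK -trmx_mul dA trmx0 mulmx0.
  move/(congr1 (fun v : 'M[R]_1 => v ord0 ord0)); rewrite -/(dotp (col i Y) d) mxE dotpC.
  by move/eqP; rewrite (negbTE di).
by rewrite ltmxErank !mxrank_tr => /andP [].
Qed.

Lemma eps_below_slack q (A : {set 'I_q}) (g v : 'I_q -> R) :
  (forall j, j \notin A -> 0 < g j) ->
  exists2 eps : R, 0 < eps & forall j, j \notin A -> eps * `|v j| <= g j.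
Proof.
move=> g0; case: (pickP (fun j => j \notin A)) => [j0 j0A|Afull]; last first.
  by exists 1 => // j jA; have := Afull j; rewrite /= jA.
pose c j := g j / (1 + `|v j|).
have [j1 j1A c_min] := arg_minP c (P := fun j => j \notin A) j0A.
have v1 j : 0 < 1 + `|v j| by apply: ltr_pwDl.
have c1 : 0 < c j1 by apply: divr_gt0; [exact: g0 | exact: v1].
exists (c j1) => // j jA; have := c_min j jA; rewrite ler_pdivlMr // => cj.
by rewrite mulrDr mulr1 in cj; have := g0 j jA; nra.
Qed.

End Frames.

Section Centering.
Variable R : realType.
Implicit Types p q : nat.

Definition centroid p q (Y : 'M[R]_(p, q)) : 'cV[R]_p := q%:R^-1 *: (Y *m const_mx 1).

Definition centered p q (Y : 'M[R]_(p, q)) : 'M[R]_(p, q) :=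
  Y - centroid Y *m const_mx 1.

Lemma col_sub_const p q (M : 'M[R]_(p, q)) (c : 'cV[R]_p) i :
  col i (M - c *m const_mx 1) = col i M - c.
Proof. by apply/colP => a; rewrite !mxE big_ord1 !mxE mulr1. Qed.

Lemma col_mulmx p q t (A : 'M[R]_(p, q)) (B : 'M[R]_(q, t)) i :
  col i (A *m B) = A *m col i B.
Proof. by rewrite !colE mulmxA. Qed.

Lemma colsub_sub_const p q q' (f : 'I_q' -> 'I_q) (M : 'M[R]_(p, q)) (c : 'cV[R]_p) :
  colsub f (M - c *m const_mx 1) = colsub f M - c *m const_mx 1.
Proof. by apply/matrixP => a b; rewrite !mxE !big_ord1 !mxE. Qed.

Lemma conv_sub_const p q (M : 'M[R]_(p, q)) (c : 'cV[R]_p) x :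
  conv M x -> conv (M - c *m const_mx 1) (x - c).
Proof. by move/(conv_affine_map 1%:M (- c)); rewrite !mul1mx mulNmx. Qed.

Lemma centered_mul1 p q (Y : 'M[R]_(p, q)) : (0 < q)%N ->
  centered Y *m (const_mx 1 : 'cV[R]_q) = 0.
Proof.
move=> q0; rewrite mulmxBl -mulmxA const1_mulmx.
under eq_bigr => i _ do rewrite mxE.
rewrite sumr_const card_ord mul_mx_scalar scalerA -[_ *+ q]mulr_natr mul1r.
by rewrite divff ?scale1r ?subrr // pnatr_eq0 -lt0n.
Qed.

End Centering.

Section FacetExistence.
Variable R : realType.
Variables (p q : nat) (Y : 'M[R]_(p, q)).
Hypothesis q_gt0 : (0 < q)%N.
Local Notation ybar := (centroid Y).
Local Notation Yc := (centered Y).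

Lemma col_centered i : col i Yc = col i Y - ybar.
Proof. exact: col_sub_const. Qed.

Lemma dim_conv_le j : dim_ge (conv Y) j -> (j <= \rank Yc)%N.
Proof.
move/dim_geP => [M [YM /affine_indepP rkM]].
have /fin_all_exists [l Ml] i : exists l : 'cV[R]_q,
    (forall j, 0 <= l j ord0) /\ \sum_j l j ord0 = 1 /\ col i M = Y *m l.
  exact/convP.
pose L : 'M[R]_(q, j.+1) := \matrix_(a, i) l i a ord0.
have ML : M = Y *m L.
  apply/trmx_inj/row_matrixP => i; rewrite -!tr_col (Ml i).2.2; congr trmx.
  by apply/colP => a; rewrite !mxE; apply: eq_bigr => c _; rewrite !mxE.
have L1 : (const_mx 1 : 'M[R]_(1, q)) *m L = const_mx 1.
  apply/matrixP => a b; rewrite (ord1 a) !mxE -[RHS](Ml b).2.1.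
  by apply: eq_bigr => c _; rewrite !mxE mul1r.
have CE : col_mx M (const_mx 1 : 'M[R]_(1, j.+1)) =
    col_mx Yc 0 *m L + col_mx ybar (1 : 'M[R]_1) *m const_mx 1.
  rewrite !mul_col_mx mul0mx mul1mx add_col_mx add0r; congr col_mx.
  by rewrite ML mulmxBl -mulmxA L1 subrK.
have r1 : (\rank (col_mx Yc (0%R : 'M[R]_(1, q)) *m L) <= \rank Yc)%N.
  by apply: leq_trans (mxrankM_maxl _ _) _; rewrite rank_col_mx0.
have r2 : (\rank (col_mx ybar (1%R : 'M[R]_1) *m (const_mx 1%R : 'M[R]_(1, j.+1))) <= 1)%N.
  exact: leq_trans (mxrankM_maxr _ _) (rank_leq_row _).
have := mxrank_add (col_mx Yc 0 *m L) (col_mx ybar (1 : 'M[R]_1) *m const_mx 1).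
by rewrite -CE rkM; lia.
Qed.

Lemma conv_dotp_le_centered (a : 'cV[R]_p) x :
  (forall i, dotp (col i Yc) a <= 1) -> conv Y x -> dotp a x <= 1 + dotp a ybar.
Proof.
move=> Ya /(conv_sub_const ybar) Yx.
have : dotp a (x - ybar) <= 1 by apply: (conv_dotp_le _ Yx) => i; rewrite dotpC.
by rewrite dotpBr; lra.
Qed.

Definition feasible (g a : 'cV[R]_p) :=
  (forall i, dotp (col i Yc) a <= 1) /\ dotp a g <= 0.

(* The columns of Yc sum to zero, so a nonzero direction in their span
   is positive on one of them. *)
Lemma exists_pos_col (mu : 'cV[R]_q) : Yc *m mu != 0 ->
  exists i, 0 < dotp (col i Yc) (Yc *m mu).
Proof.
move=> d0; apply/existsP; apply: contraR d0 => /existsPn dY; set d := Yc *m mu.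
have sum0 : \sum_i dotp (col i Yc) d = 0.
  have /(congr1 (dotp d)) := centered_mul1 Y q_gt0.
  rewrite dotp0r dotp_mulmx_cols => sum0; rewrite -[RHS]sum0.
  by apply: eq_bigr => j _; rewrite mxE mul1r dotpC.
have dY0 i : dotp (col i Yc) d = 0.
  have : \sum_i - dotp (col i Yc) d == 0 by rewrite sumrN sum0 oppr0.
  rewrite psumr_eq0 => [/allP/(_ i (mem_index_enum i))|j _].
    by rewrite /= oppr_eq0 => /eqP.
  by rewrite oppr_ge0 leNgt dY.
rewrite -dotp_self_eq0 {2}/d dotp_mulmx_cols big1 // => i _.
by rewrite dotpC dY0 mulr0.
Qed.

Lemma exists_ascent_dir g a : (\rank (maskmx Yc (active Yc a)) < \rank Yc)%N ->
  exists mu : 'cV[R]_q, [/\ Yc *m mu != 0,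
    (Yc *m mu)^T *m maskmx Yc (active Yc a) = 0 & dotp (Yc *m mu) g <= 0].
Proof.
move=> /maskmx_lt_dir [mu [d0 dA]].
have [dg|dg] := lerP (dotp (Yc *m mu) g) 0; first by exists mu.
exists (- mu); rewrite mulmxN oppr_eq0 dotpNl raddfN /= mulNmx dA oppr0.
by split=> //; lra.
Qed.

(* Move a in direction d until a new column of Yc becomes active. *)
Lemma ascent_step g a (d : 'cV[R]_p) i0 :
  feasible g a -> dotp d g <= 0 -> 0 < dotp (col i0 Yc) d ->
  (forall i, i \in active Yc a -> dotp (col i Yc) d = 0) ->
  exists a', [/\ feasible g a', active Yc a \subset active Yc a' &
    exists2 i, i \in active Yc a' & dotp (col i Yc) d != 0].
Proof.
move=> [Ya ag] dg di0 dA.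
pose slack i := (1 - dotp (col i Yc) a) / dotp (col i Yc) d.
have [i1 di1 i1_min] := arg_minP slack (P := fun i => 0 < dotp (col i Yc) d) di0.
set t := slack i1.
have t0 : 0 <= t by rewrite /t /slack divr_ge0 // ?subr_ge0 // ltW.
have a'E i : dotp (col i Yc) (a + t *: d) = dotp (col i Yc) a + t * dotp (col i Yc) d.
  by rewrite dotpDr dotpZr.
exists (a + t *: d); split.
- split=> [i|]; last by rewrite dotpDl dotpZl; nra.
  rewrite a'E; have [di|di] := lerP (dotp (col i Yc) d) 0; first by have := Ya i; nra.
  by have := i1_min i di; rewrite -/t /slack ler_pdivlMr //; lra.
- by apply/subsetP => i; rewrite !inE a'E => /eqP ai; rewrite ai dA ?inE ?ai // mulr0 addr0.
- exists i1; last by rewrite gt_eqF.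
  rewrite inE a'E /t /slack divfK; first by rewrite addrC subrK.
  by rewrite gt_eqF.
Qed.

Lemma feasible_active_full g :
  exists a, feasible g a /\ \rank (maskmx Yc (active Yc a)) = \rank Yc.
Proof.
suff /(_ (\rank Yc) 0) : forall n a, feasible g a ->
    (\rank Yc - \rank (maskmx Yc (active Yc a)) <= n)%N ->
    exists a', feasible g a' /\ \rank (maskmx Yc (active Yc a')) = \rank Yc.
  by apply; [split=> [i|]; rewrite ?dotp0r ?dotp0l // ler01 | lia].
elim=> [|n IHn] a ga rk_n; have := mxrank_maskmx Yc (active Yc a).
  by exists a; split => //; lia.
case: (ltnP (\rank (maskmx Yc (active Yc a))) (\rank Yc)) => rk_lt; last first.
  by exists a; split => //; lia.
have [mu [d0 dA dg]] := exists_ascent_dir g rk_lt.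
have [i0 di0] := exists_pos_col d0.
have dA0 i : i \in active Yc a -> dotp (col i Yc) (Yc *m mu) = 0.
  by move=> iA; have /trmx_mul_eq0P/(_ i) := dA; rewrite col_maskmx iA dotpC.
have [a' [ga' AA' [i iA' di]]] := ascent_step ga dg di0 dA0.
rewrite dotpC in di; have := mxrank_maskmx_ltS AA' iA' dA di.
have := mxrank_maskmx Yc (active Yc a').
by move=> *; apply: (IHn a' ga'); lia.
Qed.

Lemma active_frame a : \rank (maskmx Yc (active Yc a)) = \rank Yc ->
  exists M : 'M[R]_(p, \rank Yc),
    (forall l, conv Y (col l M) /\ dotp a (col l M) = 1 + dotp a ybar) /\
    affine_indep M.
Proof.
move=> rk_full; have [K [f [eK fA freeK]]] := free_colsub_maskmx Yc (active Yc a).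
rewrite rk_full in eK; subst K.
exists (colsub f Y); split=> [l|mu Ymu smu].
  rewrite col_colsub; split; first exact: conv_col.
  by have := fA l; rewrite inE col_centered dotpC dotpBr => /eqP; lra.
apply: freeK; rewrite colsub_sub_const.
by rewrite mulmxBl Ymu -mulmxA const1_mulmx smu scalar_mx0 mulmx0 subr0.
Qed.

Lemma affdim_conv : affdim_is (conv Y) (\rank Yc)%:Z.
Proof.
have -> : (\rank Yc)%:Z = (\rank Yc).+1%:Z - 1 by lia.
apply: affdim_isP => j; split=> [/dim_conv_le|j_lt]; first lia.
have [a [_ rk_full]] := feasible_active_full 0.
have [M [MA indM]] := active_frame rk_full.
have ybar_off : dotp a ybar != 1 + dotp a ybar by rewrite eq_sym -subr_eq0 addrK oner_eq0.
have indMy := affine_indep_row_mx indM (fun l => (MA l).2) ybar_off.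
have YMy := all_col_row_mx (fun l => (MA l).1) (conv_centroid Y q_gt0).
by apply: (dim_ge_colsub YMy indMy); rewrite addn1.
Qed.

Lemma facet_exists g : exists a,
  [/\ forall x, conv Y x -> dotp a x <= 1 + dotp a ybar, dotp a g <= 0 &
      is_facet (conv Y) (slice (conv Y) a (1 + dotp a ybar))].
Proof.
have [a [[aY ag] rk_full]] := feasible_active_full g.
have Ya x : conv Y x -> dotp a x <= 1 + dotp a ybar by exact: conv_dotp_le_centered.
exists a; split=> //.
have [M [MA indM]] := active_frame rk_full.
apply: (hyperplane_facet Ya affdim_conv _ _).1.
  exists ybar; split; first exact: conv_centroid.
  by rewrite eq_sym -subr_eq0 addrK oner_eq0.
by move=> j j_lt; apply: (dim_ge_colsub MA indM).
Qed.

End FacetExistence.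

Section DualVertex.
Variable R : realType.
Variables (p q : nat) (Y : 'M[R]_(p, q)).

Lemma dual_convP t : dual (conv Y) t <-> forall j, dotp (col j Y) t <= 1.
Proof.
split=> [Yt j|Yt x Yx]; first exact/Yt/conv_col.
by rewrite dotpC; apply: (conv_dotp_le _ Yx) => j; rewrite dotpC.
Qed.

(* Otherwise a direction orthogonal to all active columns lets t move both ways
   inside the polar. *)
Lemma dual_vertex_active_rank t : is_vertex (dual (conv Y)) t ->
  \rank (maskmx Y (active Y t)) = p.
Proof.
move=> [/dual_convP Yt t_ext]; set A := active Y t.
have [rk_lt|] := ltnP (\rank (maskmx Y A)) p; last by have := rank_leq_row (maskmx Y A); lia.
have [d d0 dA] := rank_lt_left_kernel rk_lt.
have dA0 j : j \in A -> dotp (col j Y) d = 0.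
  by move=> jA; have /trmx_mul_eq0P/(_ j) := dA; rewrite col_maskmx jA dotpC.
have slack j : j \notin A -> 0 < 1 - dotp (col j Y) t.
  by move=> jA; rewrite subr_gt0 lt_neqAle Yt andbT; apply: contraNN jA; rewrite inE.
have [eps eps0 eps_le] := eps_below_slack (fun j => dotp (col j Y) d) slack.
have Yt_eps c : `|c| <= eps -> dual (conv Y) (t + c *: d).
  move=> c_le; apply/dual_convP => j; rewrite dotpDr dotpZr.
  have [jA|jA] := boolP (j \in A); first by rewrite dA0 // mulr0 addr0.
  have := ler_norm (c * dotp (col j Y) d); rewrite normrM.
  have := ler_wpM2r (normr_ge0 (dotp (col j Y) d)) c_le.
  by have := eps_le j jA; lra.
have half : 0 < (1/2 : R) < 1 by apply/andP; split; lra.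
have tE : t = 1/2 *: (t + eps *: d) + (1 - 1/2) *: (t + - eps *: d).
  by apply/matrixP => a b; rewrite !mxE; field.
have eps_norm : `|eps| <= eps /\ `|- eps| <= eps by split; rewrite ?normrN ger0_norm // ltW.
move: (t_ext _ _ _ (Yt_eps _ eps_norm.1) (Yt_eps _ eps_norm.2) half tE).
move/(addrI t)/eqP; rewrite scaleNr -subr_eq0 opprK -scalerDl scaler_eq0 (negbTE d0) orbF.
by rewrite gt_eqF // addr_gt0.
Qed.

End DualVertex.

Section Main.
Variable R : realType.
Variables (m n r k s : nat) (X : 'M[R]_(m, n)) (W : 'M[R]_(m, r)) (H : 'M[R]_(r, n))
  (U : 'M[R]_(m, k)).
Hypothesis rank_X : \rank X = k.+1.
Hypothesis fbc : FBC X W H s.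
Hypothesis X_inj : injective (fun j : 'I_n => col j X).
Local Notation xbar := (centroid X).
Local Notation Xc := (centered X).
Hypothesis rank_Xc : \rank Xc = k.
Hypothesis U_orth : U^T *m U = 1%:M.
Hypothesis U_Xc : U *m (U^T *m Xc) = Xc.
Local Notation Wc := (W - xbar *m const_mx 1).
Local Notation Xt := (U^T *m Xc).
Local Notation Wt := (U^T *m Wc).
Local Notation lower x := (U^T *m x - U^T *m xbar).
Local Notation lift y := (U *m y + xbar).

Lemma n_gt0 : (0 < n)%N.
Proof. by case: n X rank_X => [|n'] // X0; rewrite thinmx0 mxrank0. Qed.

Lemma X_WH : X = W *m H.
Proof. by case: fbc. Qed.

Lemma H_stochastic j : (forall i, 0 <= H i j) /\ \sum_i H i j = 1.
Proof. by case: fbc => _ [_ [/(_ j)]]. Qed.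

Lemma r_gt0 : (0 < r)%N.
Proof.
move: rank_X; rewrite X_WH; case: r W H => [|r'] // W0 H0.
by rewrite thinmx0 mul0mx mxrank0.
Qed.

Lemma k_lt_s : (k < s)%N.
Proof. by case: fbc => _ [_ [_ [+ _]]]; rewrite rank_X. Qed.

Lemma facet_W_points a b : is_facet (conv W) (slice (conv W) a b) ->
  exists S : {set 'I_n}, [/\ (s <= #|S|)%N,
    forall j, j \in S -> dotp a (col j X) = b & affdim_is (conv_sub X S) (k%:Z - 1)].
Proof.
case: fbc => _ [_ [_ [_ [fbc_c _]]]] /fbc_c [S [sS [SF [_ Sdim]]]].
exists S; split=> // [j /SF [] //|].
by move: Sdim; rewrite rank_X; congr affdim_is; lia.
Qed.

Lemma dense_facet_X_facet_W (G : 'cV[R]_m -> Prop) (S : {set 'I_n}) :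
  is_facet (conv X) G -> (forall j, j \in S -> G (col j X)) -> (s <= #|S|)%N ->
  is_facet (conv W) G.
Proof.
case: fbc => _ [_ [_ [_ [_ fbc_d]]]] fG GS sS.
by apply: NNPP => nG; have := fbc_d G fG nG S GS (in2W X_inj); lia.
Qed.

Lemma affdim_conv_X : affdim_is (conv X) k%:Z.
Proof. by rewrite -rank_Xc; exact: affdim_conv n_gt0. Qed.

Lemma conv_X_W x : conv X x -> conv W x.
Proof. by rewrite X_WH; apply: conv_mulmx_stochastic H_stochastic. Qed.

(* A facet of conv W carries s >= k + 1 columns of X, so its trace on conv X is a
   facet of conv X with many columns, hence a facet of conv W of dimension k - 1. *)
Lemma affdim_conv_W : affdim_is (conv W) k%:Z /\ (0 < k)%N.
Proof.
pose x0 := col (Ordinal n_gt0) X.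
have [a [Wa ax0 fF]] := facet_exists W r_gt0 (x0 - centroid W).
set b := 1 + dotp a (centroid W) in Wa fF.
have [S [sS SX Sdim]] := facet_W_points fF.
have GS j : j \in S -> slice (conv X) a b (col j X) by split; [exact: conv_col | exact: SX].
have [fG affG] : is_facet (conv X) (slice (conv X) a b) /\
    affdim_is (slice (conv X) a b) (k%:Z - 1).
  apply: hyperplane_facet affdim_conv_X _ _ => [x /conv_X_W /Wa //| |j j_lt].
    exists x0; split; first exact: conv_col.
    by apply/eqP => ab; move: ax0; rewrite dotpBr ab /b; lra.
  apply: (sub_dim_ge (S := conv_sub X S)) => [x Sx|].
    by split; [exact: conv_subW Sx | exact: conv_sub_dotp_eq SX Sx].
  by apply/(Sdim.2 j); lia.
have [_ [k' [Wk' Gk']]] := dense_facet_X_facet_W fG GS sS.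
have k'E : k' = k%:Z by have := affdim_uniq Gk' affG; lia.
split; first by rewrite -k'E.
have [j jS] : exists j, j \in S by apply/set0Pn; rewrite -card_gt0; have := k_lt_s; lia.
by have /(affG.2 0) := dim_ge0 (GS j jS); lia.
Qed.

(* Otherwise the component of a column of W orthogonal to the range of U separates
   it from the affine hull of X and raises the dimension of conv W above k. *)
Lemma U_Wc : U *m (U^T *m Wc) = Wc.
Proof.
apply/trmx_inj/row_matrixP => i; rewrite -!tr_col !col_mulmx col_sub_const; congr trmx.
set w := col i W - xbar; set v := w - U *m (U^T *m w).
apply/eqP; rewrite eq_sym -subr_eq0 -/v; apply: contraT => v0.
have Utv : U^T *m v = 0 by rewrite /v mulmxBr (mulmxA U^T) U_orth mul1mx subrr.
have vU y : dotp v (U *m y) = 0 by rewrite dotp_mulmxr Utv dotp0l.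
have X_hyp x : conv X x -> conv W x /\ dotp v x = dotp v xbar.
  move=> Xx; split; first exact: conv_X_W.
  have /convP [l [_ [_ xl]]] := conv_sub_const xbar Xx.
  by apply/eqP; rewrite -subr_eq0 -dotpBr xl -/(centered X) -U_Xc -mulmxA vU.
have w_off : dotp v (col i W) != dotp v xbar.
  have wE : w = v + U *m (U^T *m w) by rewrite subrK.
  by rewrite -subr_eq0 -dotpBr -/w wE dotpDr vU addr0 dotp_self_eq0.
have /(dim_ge_extend X_hyp (conv_col W i) w_off) : dim_ge (conv X) k.
  exact/(affdim_conv_X.2 k).
by move/(affdim_conv_W.1.2 k.+1); lia.
Qed.

Lemma lower_lift y : lower (lift y) = y.
Proof. by rewrite mulmxDr mulmxA U_orth mul1mx addrK. Qed.

Lemma lift_lower_span q (M : 'M[R]_(m, q)) x :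
  U *m (U^T *m (M - xbar *m const_mx 1)) = M - xbar *m const_mx 1 ->
  conv M x -> lift (lower x) = x.
Proof.
move=> UM /(conv_sub_const xbar) /convP [l [_ [_ xl]]].
by rewrite -mulmxBr xl !mulmxA -(mulmxA U) UM -xl subrK.
Qed.

Lemma lift_lower_W x : conv W x -> lift (lower x) = x.
Proof. exact: lift_lower_span U_Wc. Qed.

Lemma lift_lower_X x : conv X x -> lift (lower x) = x.
Proof. exact: lift_lower_span U_Xc. Qed.

Lemma conv_lower q (M : 'M[R]_(m, q)) x :
  conv M x -> conv (U^T *m (M - xbar *m const_mx 1)) (lower x).
Proof. by move/(conv_affine_map U^T (- (U^T *m xbar))); rewrite mulNmx -mulmxA -mulmxBr. Qed.

Lemma conv_lift_Wt y : conv Wt y -> conv W (lift y).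
Proof. by move/(conv_affine_map U xbar); rewrite U_Wc subrK. Qed.

Lemma dotp_lower th x : dotp th (lower x) = dotp (U *m th) x - dotp (U *m th) xbar.
Proof. by rewrite dotpBr !dotp_mulmxr trmxK. Qed.

Lemma dotp_lift th y : dotp (U *m th) (lift y) = dotp th y + dotp (U *m th) xbar.
Proof. by rewrite dotpDr dotp_mulmxl mulmxA U_orth mul1mx. Qed.

Lemma col_Xt j : col j Xt = lower (col j X).
Proof. by rewrite col_mulmx col_sub_const mulmxBr. Qed.

Lemma affdim_conv_Wt : affdim_is (conv Wt) k%:Z.
Proof.
apply: eq_affdim affdim_conv_W.1 => j; split.
  apply: (dim_ge_affine_map (A := U^T) (c := - (U^T *m xbar)) (B := U) (e := xbar)).
  by move=> x Wx; split; [exact: conv_lower | exact: lift_lower_W].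
apply: (dim_ge_affine_map (A := U) (c := xbar) (B := U^T) (e := - (U^T *m xbar))).
by move=> y Wty; split; [exact: conv_lift_Wt | exact: lower_lift].
Qed.

Lemma conv_Xt_Wt y : conv Xt y -> conv Wt y.
Proof.
have H1 : (const_mx 1 : 'M[R]_(1, r)) *m H = const_mx 1.
  apply/matrixP => a b; rewrite (ord1 a) !mxE -[RHS](H_stochastic b).2.
  by apply: eq_bigr => i _; rewrite mxE mul1r.
have -> : Xt = Wt *m H by rewrite -mulmxA mulmxBl -mulmxA H1 -X_WH.
exact: conv_mulmx_stochastic H_stochastic.
Qed.

Lemma conv_Wt0 : conv Wt 0.
Proof.
apply: conv_Xt_Wt; have := conv_centroid Xt n_gt0.
by rewrite -mulmxA centered_mul1 ?n_gt0 // mulmx0 scaler0.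
Qed.

Lemma facet_Wt_valid th : is_facet (conv Wt) (slice (conv Wt) th 1) ->
  forall y, conv Wt y -> dotp th y <= 1.
Proof.
move=> fF; have [_ k_gt0] := affdim_conv_W.
have affF := facet_affdim fF affdim_conv_Wt.
case: fF => [[a [b [Wt_ab Fab]]] _].
have /dim_geP [M [FM indM]] : dim_ge (slice (conv Wt) th 1) k.-1.
  by apply/(affF.2 k.-1); lia.
have aE : a = b *: th.
  apply: (frame_normal (affine_indep_free indM (fun l => (FM l).2))) => [|l|l].
  - by lia.
  - exact: (FM l).2.
  - by have [_] := (Fab _).1 (FM l).
have b_ge0 : 0 <= b by rewrite -(dotp0r a); exact: Wt_ab conv_Wt0.
have b_gt0 : 0 < b.
  rewrite lt_neqAle b_ge0 andbT; apply/eqP => b0.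
  have : affdim_is (conv Wt) (k%:Z - 1).
    apply: eq_affdim affF => j; split; apply: sub_dim_ge => y; first by case.
    by move=> Wty; apply/Fab; split=> //; rewrite aE -b0 scale0r dotp0l.
  by move/(affdim_uniq affdim_conv_Wt); lia.
move=> y /Wt_ab; rewrite aE dotpZl -[X in _ <= X]mulr1 ler_pM2l //.
Qed.

Lemma facet_Wt_lift th : (forall y, conv Wt y -> dotp th y <= 1) ->
  is_facet (conv Wt) (slice (conv Wt) th 1) ->
  is_facet (conv W) (slice (conv W) (U *m th) (1 + dotp (U *m th) xbar)).
Proof.
move=> Wt_th fF; split.
  exists (U *m th), (1 + dotp (U *m th) xbar); split=> // x Wx.
  by have := Wt_th _ (conv_lower Wx); rewrite dotp_lower; lra.
exists k%:Z; split; first exact: affdim_conv_W.1.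
apply: eq_affdim (facet_affdim fF affdim_conv_Wt) => j; split.
  apply: (dim_ge_affine_map (A := U) (c := xbar) (B := U^T) (e := - (U^T *m xbar))).
  move=> y [Wty thy]; split; last exact: lower_lift.
  by split; [exact: conv_lift_Wt | rewrite dotp_lift thy].
apply: (dim_ge_affine_map (A := U^T) (c := - (U^T *m xbar)) (B := U) (e := xbar)).
move=> x [Wx thx]; split; last exact: lift_lower_W.
by split; [exact: conv_lower | rewrite dotp_lower thx addrK].
Qed.

Lemma dual_conv_Xt th : (forall y, conv Wt y -> dotp th y <= 1) -> dual (conv Xt) th.
Proof. by move=> Wt_th y /conv_Xt_Wt /Wt_th; rewrite dotpC. Qed.

(* k affinely independent points of conv Xt on the hyperplane <th, .> = 1 leave
   no room to write th as a proper convex combination of points of the polar. *)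
Lemma dense_slice_vertex th (S : {set 'I_n}) :
  dual (conv Xt) th ->
  (forall j, j \in S -> dotp (U *m th) (col j X) = 1 + dotp (U *m th) xbar) ->
  affdim_is (conv_sub X S) (k%:Z - 1) -> is_vertex (dual (conv Xt)) th.
Proof.
move=> Xt_th SX Sdim; split=> // y z c Xt_y Xt_z /andP [c0 c1] thE.
have [_ k_gt0] := affdim_conv_W.
have /dim_geP [M [FM indM]] : dim_ge (slice (conv Xt) th 1) k.-1.
  apply: (dim_ge_affine_map (A := U^T) (c := - (U^T *m xbar)) (B := U) (e := xbar)
    (S := conv_sub X S)); last by apply/(Sdim.2 k.-1); lia.
  move=> x Sx; have Xx := conv_subW Sx; split; last exact: lift_lower_X.
  by split; [exact: conv_lower | rewrite dotp_lower (conv_sub_dotp_eq SX Sx) addrK].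
apply: (free_frame_dotp_inj (affine_indep_free indM (fun l => (FM l).2))) => [|l].
  by lia.
have := Xt_y _ (FM l).1; have := Xt_z _ (FM l).1; have := (FM l).2.
by rewrite thE dotpDl !dotpZl !(dotpC (col l M)); nra.
Qed.

Lemma facet_Wt_vertex th : is_facet (conv Wt) (slice (conv Wt) th 1) ->
  is_vertex (dual (conv Xt)) th /\ (s <= #|active Xt th|)%N.
Proof.
move=> fF; have Wt_th := facet_Wt_valid fF.
have [S [sS SX Sdim]] := facet_W_points (facet_Wt_lift Wt_th fF).
split; first exact: dense_slice_vertex (dual_conv_Xt Wt_th) SX Sdim.
apply: leq_trans sS (subset_leq_card _); apply/subsetP => j jS.
by rewrite inE col_Xt dotpC dotp_lower SX // addrK.
Qed.

Lemma vertex_frame th : is_vertex (dual (conv Xt)) th ->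
  exists f : 'I_k -> 'I_n, (forall l, f l \in active Xt th) /\
    forall mu : 'cV[R]_k, colsub f Xt *m mu = 0 -> mu = 0.
Proof.
move=> th_vert; have [K [f [eK fA freeK]]] := free_colsub_maskmx Xt (active Xt th).
by rewrite (dual_vertex_active_rank th_vert) in eK; subst K; exists f.
Qed.

Lemma dotp_active_col th j : j \in active Xt th ->
  dotp (U *m th) (col j X) = 1 + dotp (U *m th) xbar.
Proof. by rewrite inE col_Xt dotpC dotp_lower => /eqP; lra. Qed.

(* The active columns of a vertex span a facet of conv X; as there are at least s
   of them, condition (d) makes it a facet of conv W. *)
Lemma vertex_facet_W th : is_vertex (dual (conv Xt)) th -> (s <= #|active Xt th|)%N ->
  is_facet (conv W) (slice (conv X) (U *m th) (1 + dotp (U *m th) xbar)).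
Proof.
move=> th_vert sA; have [f [fA freef]] := vertex_frame th_vert.
apply: (dense_facet_X_facet_W _ (S := active Xt th)) sA => [|j jA].
  apply: (hyperplane_facet _ affdim_conv_X _ _).1 => [x Xx||j j_lt].
  - by have := th_vert.1 _ (conv_lower Xx); rewrite dotpC dotp_lower; lra.
  - exists xbar; split; first exact: conv_centroid n_gt0.
    by rewrite eq_sym -subr_eq0 addrK oner_eq0.
  apply: (dim_ge_colsub (M := colsub f X)) j_lt => [l|mu Xmu smu].
    by rewrite col_colsub; split; [exact: conv_col | exact: dotp_active_col].
  apply: freef; rewrite -mulmx_colsub colsub_sub_const -mulmxA mulmxBl Xmu.
  by rewrite -mulmxA const1_mulmx smu scalar_mx0 mulmx0 subrr mulmx0.
by split; [exact: conv_col | exact: dotp_active_col].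
Qed.


(* The facet of conv W through the active columns pulls back to a valid inequality
   of conv Wt whose normal is proportional to th. *)
Lemma vertex_Wt_valid th : is_vertex (dual (conv Xt)) th -> (s <= #|active Xt th|)%N ->
  forall y, conv Wt y -> dotp th y <= 1.
Proof.
move=> th_vert sA; have [f [fA freef]] := vertex_frame th_vert.
case: (vertex_facet_W th_vert sA) => [[a [b [Wab Gab]]] _].
set be := b - dotp a xbar.
have Wt_ab y : conv Wt y -> dotp (U^T *m a) y <= be.
  by move=> /conv_lift_Wt /Wab; rewrite dotpDr dotp_mulmxr /be; lra.
have aE : U^T *m a = be *: th.
  apply: (frame_normal freef) => [|l|l]; first by [].
  - by have := fA l; rewrite inE col_colsub dotpC => /eqP.
  have Xfl := conv_col X (f l); have [_ ab] := (Gab _).1 (conj Xfl (dotp_active_col (fA l))).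
  rewrite col_colsub col_Xt -dotp_mulmxr.
  have -> : U *m lower (col (f l) X) = col (f l) X - xbar.
    by rewrite -[in RHS](lift_lower_X Xfl) addrK.
  by rewrite dotpBr ab.
have be_ge0 : 0 <= be by rewrite -(dotp0r (U^T *m a)); exact: Wt_ab conv_Wt0.
have be_gt0 : 0 < be.
  rewrite lt_neqAle be_ge0 andbT; apply/eqP => be0.
  have [_] : slice (conv X) (U *m th) (1 + dotp (U *m th) xbar) xbar.
    apply/Gab; split; first exact/conv_X_W/conv_centroid/n_gt0.
    by move: be0; rewrite /be; lra.
  by move/eqP; rewrite eq_sym -subr_eq0 addrK oner_eq0.
move=> y /Wt_ab; rewrite aE dotpZl -[X in _ <= X]mulr1 ler_pM2l //.
Qed.

Lemma vertex_facet_Wt th : is_vertex (dual (conv Xt)) th -> (s <= #|active Xt th|)%N ->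
  is_facet (conv Wt) (slice (conv Wt) th 1).
Proof.
move=> th_vert sA; have [f [fA freef]] := vertex_frame th_vert.
apply: (hyperplane_facet (vertex_Wt_valid th_vert sA) affdim_conv_Wt _ _).1.
  by exists 0; split; [exact: conv_Wt0 | rewrite dotp0r eq_sym oner_eq0].
move=> j j_lt; apply: (dim_ge_colsub (M := colsub f Xt)) j_lt => [l|mu Xmu _].
  rewrite col_colsub; split; first exact/conv_Xt_Wt/conv_col.
  by have := fA l; rewrite inE dotpC => /eqP.
exact: freef.
Qed.

End Main.

Theorem lemma3 (R : realType) (m n r k s : nat)
    (X : 'M[R]_(m, n)) (W : 'M[R]_(m, r)) (H : 'M[R]_(r, n))
    (U : 'M[R]_(m, k)) (Sig : 'M[R]_k) (V : 'M[R]_(n, k)) :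
  (forall i j, 0 <= X i j) ->
  (forall i j, 0 <= H i j) ->
  \rank X = k.+1 ->
  FBC X W H s ->
  injective (fun j : 'I_n => col j X) ->
  let xbar : 'cV[R]_m := n%:R^-1 *: (X *m const_mx 1) in
  let Xc := X - xbar *m (const_mx 1 : 'M[R]_(1, n)) in
  \rank Xc = k ->
  (* compact SVD  Xc = U Sig V^T *)
  U^T *m U = 1%:M -> V^T *m V = 1%:M ->
  is_diag_mx Sig -> (forall i, 0 < Sig i i) ->
  (forall i j : 'I_k, (i <= j)%N -> Sig j j <= Sig i i) ->
  Xc = U *m Sig *m V^T ->
  let Xt := U^T *m Xc in
  let Wt := U^T *m (W - xbar *m (const_mx 1 : 'M[R]_(1, r))) in
  forall theta : 'cV[R]_k,
    is_facet (conv Wt) (fun x => conv Wt x /\ dotp theta x = 1) <->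
    (is_vertex (dual (conv Xt)) theta /\
     (s <= #|[set j : 'I_n | dotp (col j Xt) theta == 1%R]|)%N).
Proof.
move=> _ _ rank_X fbc X_inj xbar Xc rank_Xc U_orth _ _ _ _ svd Xt Wt theta.
have U_Xc : U *m (U^T *m Xc) = Xc.
  by rewrite svd -!mulmxA (mulmxA U^T) U_orth mul1mx.
split=> [fF|[th_vert sA]].
  exact: (facet_Wt_vertex rank_X fbc X_inj rank_Xc U_orth U_Xc fF).
exact: (vertex_facet_Wt rank_X fbc X_inj rank_Xc U_orth U_Xc th_vert sA).
Qed.
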